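(* Consider the partially replicated key-value store running the client and server algorithms described in the context. If, when server $i$ answers a GET$(k)$ request of client $c$, a version $K$ with $K.ut>GST$ is returned to $c$ (instead of a version with timestamp at most $GST$ or created by a local PUT at $i$), then there may exist (in some execution) a version $K'$ of some key $k'$ such that $K$ dep $K'$ and client $c$ can access $k'$, but $K'$ is not visible to $c$; this violates causal consistency (which requires that whenever $K$ dep $K'$ and a client that can access both keys reads $K$, $K'$ is visible to that client).
   Context: System: servers $1,\dots,n$; clients; each client $c$ can send requests to a fixed set $S_c$ of servers; $\mathcal{G}=\{S_c : c \text{ a client}\}$. Server $i$ stores keys $\mathcal{K}_i$ in a multi-version store; $\mathcal{K}_{ij}=\mathcal{K}_i\cap\mathcal{K}_j$. A client can access key $k$ if it can issue GET$(k)$ to a server in $S_c$ storing $k$. A version is $K=\langle k,v,ut\rangle$ with timestamp $K.ut$. Servers communicate over reliable FIFO point-to-point asynchronous channels (arbitrary finite delays); server $i$ has a physical clock $Clock_i$ increasing over time. $N_i^s$ is the set of servers $j\neq i$ with $\mathcal{K}_{ij}\ne\emptyset$. Augmented share graph $G^a$: multigraph on the servers with a real edge $\{i,j\}$ iff $\mathcal{K}_{ij}\neq\emptyset$ and a virtual edge $\{i,j\}$ iff some client $c$ has $i,j\in S_c$; assumed connected. Cycle length = number of nodes; two nodes joined by both a real and a virtual edge form a cycle of length 2. $(a,b)$ denotes the directed edge from $a$ to $b$. For $k\in\mathcal{K}_i$, $L_i(k)$: for every simple cycle $(i,v_1,\dots,v_m,i)$ of length $\ge2$ in $G^a$ with $m\ge1$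 and $k\in\mathcal{K}_{v_1i}$, put $(v_1,i)\in L_i(k)$, and also $(v_m,i)\in L_i(k)$ if $(v_m,i)$ is a real edge. For $g\in\mathcal{G}$, $R(g)$: for every simple path $(v_1,\dots,v_m)$ in $G^a$ with $v_1,v_m\in g$, $m\ge2$, put $(v_2,v_1)\in R(g)$ if it is a real edge and $(v_{m-1},v_m)\in R(g)$ if it is a real edge. For $i\in g$, $R_i(g)=\{(u,v)\in R(g): v\ne i\}$. Heartbeats: $HB_{xy}$ is the latest clock value server $y$ has received from $x$. Every $\Delta$ time server $i$ sends $Clock_i$ to every $j\in O_i=\{j:(i,j)\in L_j(k), k\in\mathcal{K}_j\}\cup\{j:(i,j)\in R_z(g)\text{ for some server }z, g\in\mathcal{G}\}$; upon receiving heartbeat value $ct$ from $j$, server $i$ sets $HB_{ji}\leftarrow ct$. Every $\theta$ time server $i$ computes, for each $g\in\mathcal{G}$ with $i\in g$, $LST_i(g)=\min_{(z,i)\in R(g)}HB_{zi}$ and sends $(LST_i(g),g)$ to each server of $g$, which stores the latest received value as $LST_i(g)$. Define $LD_i(k)=\min_{(v,i)\in L_i(k)}HB_{vi}$, $RD_i(g)=\min_{(x,y)\in R_i(g)}HB_{xy}$ (as known to $i$ via the LST values it holds), and, for a GET$(k)$ of client $c$ at server $i$ with $g=S_c$ and client-supplied value $rd$, $GST=\min(LD_i(k),\max(RD_i(g),rd))$. Client $c$ keeps scalars $PT_c,GT_c$ and vector $LST_c$ indexed by $S_c$, all initially $0$. Client GET$(k)$ at $i\in S_c$: $rd=\min_{j\in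 S_c,j\ne i}LST_c(j)$; send $(k,PT_c,rd,S_c)$; receive $(v,t,\{lst_j\})$; $GT_c\leftarrow\max(GT_c,t)$; $LST_c(j)\leftarrow\max(LST_c(j),lst_j)$ for all $j\in S_c$; return $v$. Client PUT$(k,v)$ at $i$: send $(k,v,\max(PT_c,GT_c))$; receive $t$; $PT_c\leftarrow\max(PT_c,t)$. Server $i$ on GET request $(k,t,rd,g)$: if $k\in\mathcal{K}_j$ for some $j\in g\cap N_i^s$, wait until $t\le GST$; then take the latest (largest-timestamp) locally stored version $K$ of $k$ such that $K.ut\le GST$ or $K$ was created by a local PUT at $i$; reply $(K.v,K.ut,\{LST_j(g):j\in g\})$. On PUT request $(k,v,t)$: wait until $t<Clock_i$; create $K$ with $K.ut=Clock_i$; store it; send update $u_K=K$ to every server storing $k$; reply $K.ut$. On update $u$ from $j$: store $u$; $HB_{ji}\leftarrow u.ut$. Happens-before: $e\rightarrow f$ iff $e,f$ are by the same client with $e$ earlier, or $e$ is PUT$(k,v)$ and $f$ is a GET$(k)$ returning the value written by $e$, or transitively. $K$ dep $K'$ iff PUT$(k',K')\rightarrow$ PUT$(k,K)$. $K'$ is visible to client $c$ iff GET$(k')$ issued by $c$ to any server in $S_c$ returns $K''$ with $K''=K'$ or $K''$ dep $K'$. *)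

From Stdlib Require Import Relations.
From mathcomp Require Import all_boot.
Set Implicit Arguments. Unset Strict Implicit. Unset Printing Implicit Defensive.

(* Servers are 1..nserv; clients are 0..ncli-1; keys, values, clock     *)
(* values and timestamps are nat.                                     *)
Record sys := Sys {
  nserv : nat;
  keys  : nat -> seq nat;      (* K_i : keys stored at server i *)
  ncli  : nat;
  S     : nat -> seq nat       (* S_c : servers client c may contact *)
}.

Definition servers (s : sys) : seq nat := iota 1 (nserv s).
Definition clients (s : sys) : seq nat := iota 0 (ncli s).
Definition isserv (s : sys) (i : nat) : bool := i \in servers s.

Definition group (s : sys) (g : seq nat) : Prop :=
  exists c, c \in clients s /\ g = S s c.

Definition realE (s : sys) (i j : nat) : bool :=
  [&& isserv s i, isserv s j, i != j & has (fun k => k \in keys s j) (keys s i)].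
Definition virtE (s : sys) (i j : nat) : bool :=
  [&& isserv s i, isserv s j, i != j &
      has (fun c => (i \in S s c) && (j \in S s c)) (clients s)].
Definition adj (s : sys) (i j : nat) : bool := realE s i j || virtE s i j.

Definition wf_sys (s : sys) : Prop :=
  0 < nserv s /\
  (forall c, c \in clients s -> S s c != [::] /\ all (isserv s) (S s c)) /\
  (forall i j, isserv s i -> isserv s j ->
      clos_refl_trans nat (fun a b => adj s a b) i j).

(* simple cycle (i, v_1, ..., v_m, i), m >= 1, of length >= 2 in G^a,
   given by vs = [v_1; ...; v_m].  Length 2 (m = 1) needs both a real and
   a virtual edge between i and v_1. *)
Definition cycle_ok (s : sys) (i : nat) (vs : seq nat) : Prop :=
  match vs with
  | [::] => False
  | [:: v] => realE s i v && virtE s i v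
  | _ :: _ :: _ => [&& isserv s i, uniq (i :: vs), path (adj s) i vs
                      & adj s (last i vs) i]
  end.

Definition inL (s : sys) (i k v : nat) : Prop :=
  exists vs, cycle_ok s i vs /\
    k \in keys s (head 0 vs) /\ k \in keys s i /\
    (v = head 0 vs \/ (v = last 0 vs /\ realE s (last 0 vs) i)).

Definition spath (s : sys) (p : seq nat) : Prop :=
  2 <= size p /\ uniq p /\ all (isserv s) p /\ path (adj s) (head 0 p) (behead p).

Definition inR (s : sys) (g : seq nat) (a b : nat) : Prop :=
  exists p, spath s p /\ head 0 p \in g /\ last 0 p \in g /\
    ((a = nth 0 p 1 /\ b = head 0 p /\ realE s a b) \/
     (a = nth 0 p (size p - 2) /\ b = last 0 p /\ realE s a b)).

Definition inRz (s : sys) (g : seq nat) (z a b : nat) : Prop :=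
  inR s g a b /\ b <> z.

Definition inO (s : sys) (i j : nat) : Prop :=
  (exists k, k \in keys s j /\ inL s j k i) \/
  (exists z g, group s g /\ z \in g /\ inRz s g z i j).

Definition version := (nat * nat * nat)%type.
Definition vkey (K : version) : nat := K.1.1.
Definition vval (K : version) : nat := K.1.2.
Definition vut  (K : version) : nat := K.2.

(* extended naturals: None = +infinity (min over an empty set) *)
Definition leo (t : nat) (o : option nat) : bool :=
  if o is Some x then t <= x else true.
Definition maxo (a b : option nat) : option nat :=
  match a, b with Some x, Some y => Some (maxn x y) | _, _ => None end.

Inductive msg :=
| MUpd of version
| MHB  of nat
| MLST of option nat & seq nat.

Record state := St {
  clk   : nat -> nat;
  store : nat -> seq (version * bool);         (* versions at i; true = created by local PUT *)
  hb    : nat -> nat -> nat;                   (* hb x y = HB_xy (held by y) *)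
  lsts  : nat -> nat -> seq nat -> option nat; (* lsts i j g = LST_j(g) as held by i *)
  chan  : nat -> nat -> seq msg;               (* FIFO channel from i to j *)
  pt    : nat -> nat;
  gt    : nat -> nat;
  lstc  : nat -> nat -> option nat
}.

Definition upd {A} (f : nat -> A) (x : nat) (v : A) : nat -> A :=
  fun y => if y == x then v else f y.
Definition upd2 {A} (f : nat -> nat -> A) (x y : nat) (v : A) : nat -> nat -> A :=
  fun a b => if (a == x) && (b == y) then v else f a b.

Definition init (s : sys) : state :=
  {| clk := fun _ => 0;
     store := fun i => [seq ((k, 0, 0), false) | k <- keys s i];
     hb := fun _ _ => 0;
     lsts := fun _ _ _ => Some 0;
     chan := fun _ _ => [::];
     pt := fun _ => 0; gt := fun _ => 0;
     lstc := fun _ _ => Some 0 |}.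

Definition leLD (s : sys) (st : state) (i k t : nat) : Prop :=
  forall v, inL s i k v -> t <= hb st v i.
(* t <= RD_i(g), via the LST values held by i *)
Definition leRD (s : sys) (st : state) (i : nat) (g : seq nat) (t : nat) : Prop :=
  forall y, y \in g -> y <> i -> (exists z, inR s g z y) -> leo t (lsts st i y g).
Definition lerd (s : sys) (st : state) (c i t : nat) : Prop :=
  forall j, j \in S s c -> j <> i -> leo t (lstc st c j).
(* t <= GST = min(LD_i(k), max(RD_i(g), rd)) for a GET(k) of c at i *)
Definition leGST (s : sys) (st : state) (c i k t : nat) : Prop :=
  leLD s st i k t /\ (leRD s st i (S s c) t \/ lerd s st c i t).

Definition must_wait (s : sys) (i k : nat) (g : seq nat) : Prop :=
  exists j, j \in g /\ j <> i /\ realE s i j /\ k \in keys s j.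

Definition eligible (s : sys) (st : state) (c i k : nat) (Kb : version * bool) : Prop :=
  Kb \in store st i /\ vkey Kb.1 = k /\ (leGST s st c i k (vut Kb.1) \/ Kb.2 = true).

Definition get_ok (s : sys) (st : state) (c i k : nat) (Kb : version * bool) : Prop :=
  eligible s st c i k Kb /\
  (forall Kb', eligible s st c i k Kb' -> vut Kb'.1 <= vut Kb.1).

Definition lstval (s : sys) (st : state) (i : nat) (g : seq nat) (l : option nat) : Prop :=
  (l = None /\ forall z, ~ inR s g z i) \/
  (exists x, l = Some x /\ (exists z, inR s g z i /\ x = hb st z i) /\
     forall z, inR s g z i -> x <= hb st z i).

Definition after_get (s : sys) (st : state) (c i : nat) (K : version) : state :=
  {| clk := clk st; store := store st; hb := hb st; lsts := lsts st; chan := chan st;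
     pt := pt st;
     gt := upd (gt st) c (maxn (gt st c) (vut K));
     lstc := fun c' j => if (c' == c) && (j \in S s c)
                         then maxo (lstc st c j) (lsts st i j (S s c))
                         else lstc st c' j |}.

(* Labels and transitions of the MODIFIED algorithm: every step of the *)
(* algorithm of the context, plus deviant GET replies returning a      *)
(* non-local version K with K.ut > GST.                               *)
Inductive label :=
| LPut of nat & nat & version            (* client c, server i, created version *)
| LGet of nat & nat & version & bool     (* client c, server i, returned version, deviant? *)
| LInt.

Inductive mstep (s : sys) : state -> label -> state -> Prop :=
| SGet st c i k Kb :
    c \in clients s -> i \in S s c -> k \in keys s i ->
    (must_wait s i k (S s c) -> leGST s st c i k (pt st c)) ->
    get_ok s st c i k Kb ->
    mstep s st (LGet c i Kb.1 false) (after_get s st c i Kb.1)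
| SGetDev st c i k K :
    c \in clients s -> i \in S s c -> k \in keys s i ->
    (must_wait s i k (S s c) -> leGST s st c i k (pt st c)) ->
    (K, false) \in store st i -> vkey K = k ->
    ~ leGST s st c i k (vut K) ->
    mstep s st (LGet c i K true) (after_get s st c i K)
| SPut st c i k v :
    c \in clients s -> i \in S s c -> k \in keys s i ->
    maxn (pt st c) (gt st c) < clk st i ->
    mstep s st (LPut c i (k, v, clk st i))
      {| clk := clk st;
         store := upd (store st) i (rcons (store st i) ((k, v, clk st i), true));
         hb := hb st; lsts := lsts st;
         chan := fun a b => if (a == i) && (b != i) && isserv s b && (k \in keys s b)
                            then rcons (chan st a b) (MUpd (k, v, clk st i))
                            else chan st a b;
         pt := upd (pt st) c (maxn (pt st c) (clk st i));
         gt := gt st; lstc := lstc st |}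
| STick st i t :
    isserv s i -> clk st i < t ->
    mstep s st LInt
      {| clk := upd (clk st) i t; store := store st; hb := hb st; lsts := lsts st;
         chan := chan st; pt := pt st; gt := gt st; lstc := lstc st |}
| SHeartbeat st i (js : seq nat) :
    isserv s i -> (forall j, j \in js <-> inO s i j) ->
    mstep s st LInt
      {| clk := clk st; store := store st; hb := hb st; lsts := lsts st;
         chan := fun a b => if (a == i) && (b \in js)
                            then rcons (chan st a b) (MHB (clk st i))
                            else chan st a b;
         pt := pt st; gt := gt st; lstc := lstc st |}
| SLst st i (g : seq nat) l :
    group s g -> i \in g -> lstval s st i g l ->
    mstep s st LInt
      {| clk := clk st; store := store st; hb := hb st;
         lsts := fun a b g' => if [&& a == i, b == i & g' == g] then l else lsts st a b g';
         chan := fun a b => if [&& a == i, b \in g & b != i]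
                            then rcons (chan st a b) (MLST l g)
                            else chan st a b;
         pt := pt st; gt := gt st; lstc := lstc st |}
| SRecvUpd st j i u rest :
    chan st j i = MUpd u :: rest ->
    mstep s st LInt
      {| clk := clk st; store := upd (store st) i (rcons (store st i) (u, false));
         hb := upd2 (hb st) j i (vut u); lsts := lsts st;
         chan := upd2 (chan st) j i rest;
         pt := pt st; gt := gt st; lstc := lstc st |}
| SRecvHB st j i ct rest :
    chan st j i = MHB ct :: rest ->
    mstep s st LInt
      {| clk := clk st; store := store st;
         hb := upd2 (hb st) j i ct; lsts := lsts st;
         chan := upd2 (chan st) j i rest;
         pt := pt st; gt := gt st; lstc := lstc st |}
| SRecvLST st j i l g rest :
    chan st j i = MLST l g :: rest ->
    mstep s st LInt
      {| clk := clk st; store := store st; hb := hb st;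
         lsts := fun a b g' => if [&& a == i, b == j & g' == g] then l else lsts st a b g';
         chan := upd2 (chan st) j i rest;
         pt := pt st; gt := gt st; lstc := lstc st |}.

Fixpoint run (s : sys) (st : state) (tr : seq (label * state)) : Prop :=
  match tr with
  | [::] => True
  | (l, st') :: tr' => mstep s st l st' /\ run s st' tr'
  end.

Definition labels (tr : seq (label * state)) : seq label := map fst tr.

Definition client_of (l : label) : option nat :=
  match l with LPut c _ _ => Some c | LGet c _ _ _ => Some c | LInt => None end.

Definition hb_base (ls : seq label) (e f : nat) : Prop :=
  e < f < size ls /\
  ((exists c, client_of (nth LInt ls e) = Some c /\ client_of (nth LInt ls f) = Some c) \/
   (exists c i K c' i' d, nth LInt ls e = LPut c i K /\ nth LInt ls f = LGet c' i' K d)).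

Definition hbr (ls : seq label) : nat -> nat -> Prop := clos_trans nat (hb_base ls).

Definition dep (ls : seq label) (K K' : version) : Prop :=
  exists e f c i c' i', nth LInt ls e = LPut c i K' /\ nth LInt ls f = LPut c' i' K /\
    hbr ls e f.

Definition can_access (s : sys) (c k : nat) : Prop :=
  exists i, i \in S s c /\ k \in keys s i.

From Stdlib Require Import Relations.
From mathcomp Require Import all_boot.

(* Three servers: server 1 stores keys 0 and 1, server 2 stores key 1 and
   server 3 stores key 0; client 0 talks to server 1, client 1 to servers 2
   and 3.  Client 0 writes key 0 and then key 1 at server 1, so the second
   version depends on the first.  Only the update of key 1 reaches server 2.
   Server 2 has no LST value from server 3 and client 1 has never read
   anything, so both RD and rd are 0 and the GST of client 1's GET(1) at
   server 2 is 0; returning the fresh version of key 1 is the deviant reply.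
   Client 1 then reads key 0 at server 3, which only holds the initial
   version: that version was never written by a PUT, so it depends on
   nothing, and the version of key 0 written by client 0 is not visible. *)

Lemma leo0 (o : option nat) : leo 0 o.
Proof. by case: o. Qed.

Lemma leGST0 (s : sys) (st : state) (c i k : nat) : leGST s st c i k 0.
Proof. by split=> [v _|]; last by left=> y _ _ _; apply: leo0. Qed.

Lemma get_ok_sole (s : sys) (st : state) (c i k : nat) (K : version) :
  store st i = [:: (K, false)] -> vkey K = k -> leGST s st c i k (vut K) ->
  get_ok s st c i k (K, false).
Proof.
move=> storeE keyK leK; split; first by split; [rewrite storeE inE | split; last left].
by move=> Kb' [+ _]; rewrite storeE inE => /eqP ->.
Qed.

Lemma hbr_same_client (ls : seq label) (e f c : nat) :
  e < f < size ls ->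
  client_of (nth LInt ls e) = Some c -> client_of (nth LInt ls f) = Some c ->
  hbr ls e f.
Proof. by move=> ltef ce cf; apply: t_step; split=> //; left; exists c. Qed.

Lemma dep_put (ls : seq label) (K K' : version) :
  dep ls K K' -> exists f c i, nth LInt ls f = LPut c i K.
Proof. by move=> [_ [f [_ [_ [c [i [_ [putK _]]]]]]]]; exists f, c, i. Qed.

Lemma clos_rt_hub (T : Type) (R : relation T) (P : T -> Prop) (h : T) :
  (forall x, P x -> clos_refl_trans T R x h /\ clos_refl_trans T R h x) ->
  forall x y, P x -> P y -> clos_refl_trans T R x y.
Proof. by move=> hub x y /hub [xh _] /hub [_ hy]; apply: rt_trans hy. Qed.

Definition ex_sys : sys :=
  {| nserv := 3;
     keys := fun i => match i with 1 => [:: 0; 1] | 2 => [:: 1] | 3 => [:: 0] | _ => [::] end;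
     ncli := 2;
     S := fun c => if c is 0 then [:: 1] else [:: 2; 3] |}.

Lemma wf_ex_sys : wf_sys ex_sys.
Proof.
split=> //; split=> [c|]; first by rewrite !inE => /orP[] /eqP ->.
apply: (@clos_rt_hub _ _ _ 1) => x.
by rewrite /isserv /servers /= !inE => /or3P[] /eqP ->; split; constructor.
Qed.

Lemma ex_no_wait (i k : nat) : must_wait ex_sys i k (S ex_sys 1) -> i \notin S ex_sys 1.
Proof.
move=> [j [jS [ji [rij _]]]]; apply/negP; rewrite !inE in jS *.
by case/orP: jS rij ji => /eqP -> rij ji /orP[] /eqP iE; subst i.
Qed.

Definition tick (st : state) (i t : nat) : state :=
  {| clk := upd (clk st) i t; store := store st; hb := hb st; lsts := lsts st;
     chan := chan st; pt := pt st; gt := gt st; lstc := lstc st |}.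

Definition put (s : sys) (st : state) (c i k v : nat) : state :=
  {| clk := clk st;
     store := upd (store st) i (rcons (store st i) ((k, v, clk st i), true));
     hb := hb st; lsts := lsts st;
     chan := fun a b => if (a == i) && (b != i) && isserv s b && (k \in keys s b)
                        then rcons (chan st a b) (MUpd (k, v, clk st i))
                        else chan st a b;
     pt := upd (pt st) c (maxn (pt st c) (clk st i));
     gt := gt st; lstc := lstc st |}.

Definition recv_upd (st : state) (j i : nat) (u : version) (rest : seq msg) : state :=
  {| clk := clk st; store := upd (store st) i (rcons (store st i) (u, false));
     hb := upd2 (hb st) j i (vut u); lsts := lsts st;
     chan := upd2 (chan st) j i rest;
     pt := pt st; gt := gt st; lstc := lstc st |}.

Definition st1 := tick (init ex_sys) 1 1.
Definition st2 := put ex_sys st1 0 1 0 1.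
Definition st3 := tick st2 1 2.
Definition st4 := put ex_sys st3 0 1 1 1.
Definition st5 := recv_upd st4 1 2 (1, 1, 2) [::].
Definition st6 := after_get ex_sys st5 1 2 (1, 1, 2).
Definition st7 := after_get ex_sys st6 1 3 (0, 0, 0).

Definition ex_trace : seq (label * state) :=
  [:: (LInt, st1); (LPut 0 1 (0, 1, 1), st2); (LInt, st3); (LPut 0 1 (1, 1, 2), st4);
      (LInt, st5); (LGet 1 2 (1, 1, 2) true, st6); (LGet 1 3 (0, 0, 0) false, st7)].

(* (1, 3) is in R(g) through the path (2, 1, 3), so LST_3(g), still 0 at
   server 2, bounds RD; the client's rd is 0 as well. *)
Lemma ex_gst_stale : ~ leGST ex_sys st5 1 2 1 2.
Proof.
have R3 : exists z, inR ex_sys (S ex_sys 1) z 3 by exists 1, [:: 2; 1; 3]; do 3 split=> //; right.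
by case=> _ [/(_ 3 isT ltac:(by []) R3) | /(_ 3 isT ltac:(by []))].
Qed.

Lemma ex_run : run ex_sys (init ex_sys) ex_trace.
Proof.
split; first exact: STick.
split; first exact: SPut.
split; first exact: STick.
split; first exact: SPut.
split; first exact: (@SRecvUpd _ _ _ _ _ [::]).
split; first by apply: (SGetDev (k := 1)) => //; [move/ex_no_wait | exact: ex_gst_stale].
split=> //; apply: (SGet (k := 0) (Kb := (0, 0, 0, false))) => // [/ex_no_wait //|].
exact/get_ok_sole/leGST0.
Qed.

Lemma ex_initial_never_put (f c i : nat) :
  nth LInt (labels ex_trace) f <> LPut c i (0, 0, 0).
Proof. by do 7 case: f => [|f] //=; rewrite nth_nil. Qed.

Theorem theorem6p1 :
  exists (s : sys) (tr : seq (label * state)),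
    wf_sys s /\ run s (init s) tr /\
    exists p c i K,
      nth LInt (labels tr) p = LGet c i K true /\
      exists K',
        dep (labels tr) K K' /\ can_access s c (vkey K') /\
        (* K' is not visible to c: a later (regular) GET(vkey K') by c
           returns a version that is neither K' nor depends on K' *)
        exists q j K'',
          p < q /\ nth LInt (labels tr) q = LGet c j K'' false /\
          vkey K'' = vkey K' /\ K'' <> K' /\ ~ dep (labels tr) K'' K'.
Proof.
exists ex_sys, ex_trace; split; first exact: wf_ex_sys.
split; first exact: ex_run.
exists 5, 1, 2, (1, 1, 2); split=> //.
exists (0, 1, 1); split.
  by exists 1, 3, 0, 1, 0, 1; do 2 split=> //; apply: (@hbr_same_client _ _ _ 0).
split; first by exists 3.
exists 6, 3, (0, 0, 0); do 4 split=> //.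
by move/dep_put=> [f [c [i]]]; apply: ex_initial_never_put.
Qed.
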